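(* Consider estimation of the open-loop scalar system $\dot X(t)=aX(t)$, $a>0$, with random initial state $|X(0)|<L$, over the timing channel described in the context. If there exists $\Gamma_0>1$ such that along the sequence of estimation times $t_n=\Gamma_0\,\mathbb{E}(\mathcal{T}_n)$ the estimates satisfy $|X(t_n)-\hat X(t_n)|\to0$ in probability as $n\to\infty$, then there is an estimator with $|X(t)-\hat X(t)|\to0$ in probability as $t\to\infty$.
   Context: Timing channel: symbols from a one-element alphabet; initialized with a symbol received at time $0$; after the acknowledgment of the $i$-th reception the sender waits $W_{i+1}\ge0$ and transmits the next symbol, received after a random delay $S_{i+1}\ge0$; the $W_i$ are i.i.d. (random codebook), the $S_i$ are i.i.d. and independent of the $W_i$; $D_i=W_i+S_i$, $\mathcal{T}_n=\sum_{i=1}^nD_i$. The estimator at time $t$ uses the inter-reception times of all symbols received up to time $t$, $L$ and the dynamics. *)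

From HB Require Import structures.
From mathcomp Require Import all_boot all_order all_algebra.
From mathcomp Require Import all_classical all_reals all_analysis.
Set Implicit Arguments. Unset Strict Implicit. Unset Printing Implicit Defensive.
Import Order.TTheory GRing.Theory Num.Theory.
Import numFieldNormedType.Exports.
Local Open Scope classical_set_scope.
Local Open Scope ring_scope.

Section defs.
Context {d : measure_display} {T : measurableType d} {R : realType}.
Variable P : probability T R.

Definition iid_seq (X : nat -> T -> R) : Prop :=
  [/\ (forall i, measurable_fun setT (X i)),
      (forall i (B : set R), measurable B -> P (X i @^-1` B) = P (X 0%N @^-1` B)) &
      (forall (s : seq nat) (B : nat -> set R), uniq s ->
         (forall i, measurable (B i)) ->
         P (\bigcap_(i in [set` s]) (X i @^-1` B i)) =
         (\big[*%E/1%E]_(i <- s) P (X i @^-1` B i))%E)].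

Definition indep_seqs (X Y : nat -> T -> R) : Prop :=
  forall (s1 s2 : seq nat) (A B : nat -> set R),
    (forall i, measurable (A i)) -> (forall i, measurable (B i)) ->
    P ((\bigcap_(i in [set` s1]) (X i @^-1` A i)) `&`
       (\bigcap_(j in [set` s2]) (Y j @^-1` B j))) =
    (P (\bigcap_(i in [set` s1]) (X i @^-1` A i)) *
     P (\bigcap_(j in [set` s2]) (Y j @^-1` B j)))%E.

Definition cvg_prob0 {I : Type} (F : set_system I) (Y : I -> T -> R) : Prop :=
  forall eps : R, 0 < eps ->
    (fun k => P [set w | eps <= `|Y k w|]) @ F --> 0%E.

End defs.

(* Timing channel.  Symbol i+1 (i : nat) has waiting time W i and delay S i;
   D i = W i + S i is the (i+1)-th inter-reception time. *)
Definition Dtime {T : Type} {R : realType} (W S : nat -> T -> R) (i : nat) (w : T) : R :=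
  W i w + S i w.

(* calT n = D_1 + ... + D_n : reception time of the n-th symbol. *)
Definition calT {T : Type} {R : realType} (W S : nat -> T -> R) (n : nat) (w : T) : R :=
  \sum_(i < n) Dtime W S i w.

(* Information available to the estimator at time t: the inter-reception
   times of all symbols received up to time t (Some D_{i+1} if symbol i+1 has
   been received by time t, None otherwise). *)
Definition obs {T : Type} {R : realType} (W S : nat -> T -> R) (t : R) (w : T)
  : nat -> option R :=
  fun i => if calT W S i.+1 w <= t then Some (Dtime W S i w) else None.

Definition estimator_ok {d : measure_display} {T : measurableType d} {R : realType}
  (W S : nat -> T -> R) (Xh : R -> (nat -> option R) -> R) : Prop :=
  forall t : R, measurable_fun setT (fun w => Xh t (obs W S t w)).

Definition state {T : Type} {R : realType} (a : R) (X0 : T -> R) (t : R) (w : T) : R :=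
  expR (a * t) * X0 w.

From mathcomp Require Import all_boot all_order all_algebra.
From mathcomp Require Import all_classical all_reals all_analysis.
From mathcomp Require Import measurable_realfun.
Import Order.TTheory GRing.Theory Num.Theory.
Import archimedean.Num.Theory.
Local Open Scope classical_set_scope.
Local Open Scope ring_scope.

(* Since E T_n = n E D_1, the estimation times t_n = n B form an arithmetic
   grid of step B = Gamma0 E D_1.  At time t the new estimator takes the last
   grid time t_k <= t, discards the symbols received after t_k, runs the given
   estimator at t_k and propagates its estimate by the dynamics:
   Xh(t) = e^(a (t - t_k)) Xh0(t_k).  The error at t is then e^(a (t - t_k))
   times the error at t_k; the factor is at most e^(a B) and k -> oo as
   t -> oo.  If B = 0, every t_n is 0, so the error at time 0 is already
   negligible, and so is any multiple of it. *)

Lemma ge0_integral_eq_law {d : measure_display} {T : measurableType d}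
  {R : realType} (P : probability T R) {X Y : T -> R} :
  measurable_fun setT X -> measurable_fun setT Y ->
  (forall w, 0 <= X w) -> (forall w, 0 <= Y w) ->
  (forall B : set R, measurable B -> P (X @^-1` B) = P (Y @^-1` B)) ->
  (\int[P]_w (X w)%:E = \int[P]_w (Y w)%:E)%E.
Proof.
move=> mX mY X_ge0 Y_ge0 XY.
pose f := EFin \o (fun y : R => `|y|).
have mf : measurable_fun [set: R] f.
  by apply: measurableT_comp => //; exact: normr_measurable.
have int_pushforward (Z : T -> R) : measurable_fun setT Z ->
    (forall w, 0 <= Z w) ->
    (\int[P]_w (Z w)%:E = \int[pushforward P Z]_(y in setT) f y)%E.
  move=> mZ Z_ge0; rewrite ge0_integral_pushforward //; last first.
    by move=> y _; rewrite lee_fin.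
  by apply: eq_integral => w _; rewrite /f /= ger0_norm.
rewrite (int_pushforward X) // (int_pushforward Y) //.
by apply: eq_measure_integral => A mA _; exact: XY.
Qed.

Lemma fine_EFinM_ge0 (R : realType) (x : R) (y : \bar R) :
  0 <= x -> (0 <= y)%E -> fine (x%:E * y)%E = x * fine y.
Proof.
move=> x_ge0; case: y => [r| |] _ //=.
have [->|x_neq0] := eqVneq x 0; first by rewrite mul0e mul0r.
by rewrite gt0_muley ?mulr0 // lte_fin lt_neqAle eq_sym x_neq0.
Qed.

Section reception_times.
Context {T : Type} {R : realType} {W S : nat -> T -> R}.

Lemma calTS n w : calT W S n.+1 w = calT W S n w + Dtime W S n w.
Proof. by rewrite /calT big_ord_recr. Qed.

Hypotheses (W_ge0 : forall i w, 0 <= W i w) (S_ge0 : forall i w, 0 <= S i w).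

Lemma Dtime_ge0 i w : 0 <= Dtime W S i w.
Proof. exact: addr_ge0. Qed.

Lemma le_calT m n w : (m <= n)%N -> calT W S m w <= calT W S n w.
Proof.
elim: n => [|n IHn]; first by rewrite leqn0 => /eqP ->.
rewrite leq_eqVlt => /orP[/eqP -> //|]; rewrite ltnS => /IHn le_mn.
by rewrite calTS (le_trans le_mn) // lerDl Dtime_ge0.
Qed.

(* Symbol i+1 has been received by time s iff the partial sum of the
   inter-reception times up to it is at most s, so [obs_until s] recovers the
   information at time s from the information at any later time. *)
Definition obs_until (s : R) (o : nat -> option R) : nat -> option R :=
  fun i => if o i is Some x then
             if \sum_(j < i.+1) odflt 0 (o j) <= s then Some x else None
           else None.

Lemma obs_until_obs s t w : s <= t -> obs_until s (obs W S t w) = obs W S s w.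
Proof.
move=> le_st; apply: funext => i; rewrite /obs_until /obs.
case: ifP => [recv_i|]; last by case: ifP => // /le_trans/(_ le_st) ->.
suff -> : \sum_(j < i.+1) odflt 0 (if calT W S j.+1 w <= t
            then Some (Dtime W S j w) else None) = calT W S i.+1 w by [].
apply: eq_bigr => j _; rewrite (le_trans _ recv_i) //.
by apply: le_calT; exact: ltn_ord.
Qed.

End reception_times.

Lemma expectation_calT {d : measure_display} {T : measurableType d}
  {R : realType} (P : probability T R) (W S : nat -> T -> R) n :
  (forall i w, 0 <= W i w) -> (forall i w, 0 <= S i w) ->
  iid_seq P W -> iid_seq P S ->
  (\int[P]_w (calT W S n w)%:E = n%:R%:E * \int[P]_w (Dtime W S 0 w)%:E)%E.
Proof.
move=> W_ge0 S_ge0 [mW lawW _] [mS lawS _].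
have mEFin (f : T -> R) :
    measurable_fun setT f -> measurable_fun setT (fun w => (f w)%:E).
  by move=> mf; exact: measurableT_comp.
have int_Dtime i :
    (\int[P]_w (Dtime W S i w)%:E = \int[P]_w (Dtime W S 0 w)%:E)%E.
  rewrite /Dtime; under eq_integral do rewrite EFinD.
  under [RHS]eq_integral do rewrite EFinD.
  rewrite !ge0_integralD //;
    try by [apply: mEFin | move=> w _; rewrite lee_fin ?W_ge0 ?S_ge0].
  by rewrite (ge0_integral_eq_law P (mW i) (mW 0) (W_ge0 i) (W_ge0 0) (lawW i))
             (ge0_integral_eq_law P (mS i) (mS 0) (S_ge0 i) (S_ge0 0) (lawS i)).
rewrite /calT; under eq_integral do rewrite -sumEFin.
rewrite ge0_integral_sum //; last first.
- by move=> i w _; rewrite lee_fin Dtime_ge0.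
- by move=> i; apply: mEFin; exact: measurable_funD.
under eq_bigr do rewrite int_Dtime.
by rewrite sumr_const card_ord mule_natl.
Qed.

Section convergence_in_probability.
Context {d : measure_display} {T : measurableType d} {R : realType}.
Variable P : probability T R.

Lemma measurable_ge_norm (f : T -> R) (e : R) :
  measurable_fun setT f -> measurable [set w | e <= `|f w|].
Proof.
move=> mf; rewrite (_ : [set w | _] = setT `&` ((fun w => `|f w|) @^-1` `[e, +oo[)).
  exact: measurableT_comp (@normr_measurable R setT) mf measurableT _
    (measurable_itv _).
by rewrite setTI; apply/seteqP; split => w /=; rewrite in_itv /= andbT.
Qed.

Lemma le_prob_ge_norm (Y Z : T -> R) (C eps : R) :
  measurable_fun setT Y -> measurable_fun setT Z -> 0 < C ->
  (forall w, `|Y w| <= C * `|Z w|) ->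
  (P [set w | (eps <= `|Y w|)%R] <= P [set w | (eps / C <= `|Z w|)%R])%E.
Proof.
move=> mY mZ C_gt0 YZ; apply: le_measure; rewrite ?inE; try exact: measurable_ge_norm.
by move=> w /= eps_le; rewrite ler_pdivrMr // mulrC (le_trans eps_le).
Qed.

Lemma cvg_prob0_le_scale {I : Type} {F : set_system I} {FF : Filter F}
  {Y Z : I -> T -> R} {C : R} :
  (forall i, measurable_fun setT (Y i)) -> (forall i, measurable_fun setT (Z i)) ->
  0 < C -> (\forall i \near F, forall w, `|Y i w| <= C * `|Z i w|) ->
  cvg_prob0 P F Z -> cvg_prob0 P F Y.
Proof.
move=> mY mZ C_gt0 YZ Z_cvg eps eps_gt0.
apply: (squeeze_cvge _ (cvg_cst 0%E) (Z_cvg _ (divr_gt0 eps_gt0 C_gt0))).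
by near=> i; rewrite measure_ge0 le_prob_ge_norm //; near: i.
Unshelve. all: end_near.
Qed.

Lemma cvg_prob0_cst_null {I : Type} {F : set_system I} {FF : ProperFilter F}
  {Z : T -> R} :
  cvg_prob0 P F (fun=> Z) ->
  forall delta, 0 < delta -> P [set w | delta <= `|Z w|] = 0%E.
Proof.
by move=> Z_cvg delta /Z_cvg/(cvg_lim (@ereal_hausdorff R)) <-; rewrite lim_cst.
Qed.

Lemma cvg_prob0_null_scale {I : Type} {F : set_system I} {FF : Filter F}
  {Y : I -> T -> R} {Z : T -> R} {c : I -> R} :
  (forall i, measurable_fun setT (Y i)) -> measurable_fun setT Z ->
  (forall delta, 0 < delta -> P [set w | delta <= `|Z w|] = 0%E) ->
  (forall i, 0 < c i) -> (\forall i \near F, forall w, `|Y i w| <= c i * `|Z w|) ->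
  cvg_prob0 P F Y.
Proof.
move=> mY mZ Z_null c_gt0 YZ eps eps_gt0.
apply: cvg_near_cst; near=> i; apply/le_anti; rewrite measure_ge0 andbT.
by rewrite -(Z_null (eps / c i)) ?divr_gt0 ?le_prob_ge_norm //; near: i.
Unshelve. all: end_near.
Qed.

End convergence_in_probability.

Definition est_error {T : Type} {R : realType} (a : R) (X0 : T -> R)
  (W S : nat -> T -> R) (Xh : R -> (nat -> option R) -> R) (t : R) (w : T) : R :=
  state a X0 t w - Xh t (obs W S t w).

Definition extrapolate {R : realType} (a : R) (sigma : R -> R)
  (Xh0 : R -> (nat -> option R) -> R) (t : R) (o : nat -> option R) : R :=
  if sigma t <= t then expR (a * (t - sigma t)) * Xh0 (sigma t) (obs_until (sigma t) o)
  else 0.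

Section extrapolation.
Context {d : measure_display} {T : measurableType d} {R : realType}.
Variables (a : R) (sigma : R -> R).
Context {X0 : T -> R} {W S : nat -> T -> R} {Xh0 : R -> (nat -> option R) -> R}.
Hypotheses (W_ge0 : forall i w, 0 <= W i w) (S_ge0 : forall i w, 0 <= S i w).

Lemma estimator_ok_extrapolate :
  estimator_ok W S Xh0 -> estimator_ok W S (extrapolate a sigma Xh0).
Proof.
move=> Xh0_ok t; rewrite /extrapolate; case: (boolP (sigma t <= t)) => [le_st|_].
  under eq_fun do rewrite obs_until_obs //.
  by apply: measurable_funM; [exact: measurable_cst|exact: Xh0_ok].
exact: measurable_cst.
Qed.

Lemma est_error_extrapolate t w : sigma t <= t ->
  est_error a X0 W S (extrapolate a sigma Xh0) t w =
  expR (a * (t - sigma t)) * est_error a X0 W S Xh0 (sigma t) w.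
Proof.
move=> le_st; rewrite /est_error /extrapolate /state le_st obs_until_obs //.
by rewrite [RHS]mulrBr mulrA -expRD -mulrDr subrK.
Qed.

Lemma measurable_est_error (Xh : R -> (nat -> option R) -> R) t :
  measurable_fun setT X0 -> estimator_ok W S Xh ->
  measurable_fun setT (est_error a X0 W S Xh t).
Proof.
move=> mX0 Xh_ok; apply: measurable_funB; last exact: Xh_ok.
by apply: measurable_funM => //; exact: measurable_cst.
Qed.

End extrapolation.

Section grid.
Context {R : realType} {B : R}.

Lemma truncn_div_le (t : R) : 0 <= B -> 0 <= t -> (Num.truncn (t / B))%:R * B <= t.
Proof.
move=> B_ge0 t_ge0; have [->|B_neq0] := eqVneq B 0; first by rewrite mulr0.
by rewrite -ler_pdivlMr ?lt_def ?B_neq0 // truncn_le divr_ge0.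
Qed.

Lemma truncn_div_gap (t : R) : 0 < B -> t - (Num.truncn (t / B))%:R * B <= B.
Proof.
move=> B_gt0; rewrite lerBlDl -[X in _ + X]mul1r -mulrDl natr1.
by rewrite -ler_pdivrMr // ltW // truncnS_gt.
Qed.

Lemma truncn_div_cvg : 0 < B -> (fun t : R => Num.truncn (t / B)) @ +oo --> \oo.
Proof.
move=> B_gt0; apply/cvgnyPge => N; near=> t.
by rewrite truncn_ge_nat ?ler_pdivlMr // divr_ge0 // ltW.
Unshelve. all: end_near.
Qed.

End grid.

Theorem lemma2 (d : measure_display) (T : measurableType d) (R : realType)
  (P : probability T R) (a L : R) (X0 : T -> R) (W S : nat -> T -> R)
  (Xh0 : R -> (nat -> option R) -> R) (Gamma0 : R) :
  0 < a ->
  measurable_fun setT X0 -> (forall w, `|X0 w| < L) ->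
  (forall i w, 0 <= W i w) -> (forall i w, 0 <= S i w) ->
  iid_seq P W -> iid_seq P S -> indep_seqs P S W ->
  (forall i, P.-integrable setT (EFin \o W i)) ->
  (forall i, P.-integrable setT (EFin \o S i)) ->
  estimator_ok W S Xh0 ->
  1 < Gamma0 ->
  let tn := fun n : nat => Gamma0 * fine (\int[P]_w (calT W S n w)%:E) in
  cvg_prob0 P \oo
    (fun n w => state a X0 (tn n) w - Xh0 (tn n) (obs W S (tn n) w)) ->
  exists Xh : R -> (nat -> option R) -> R,
    estimator_ok W S Xh /\
    cvg_prob0 P (+oo : set_system R)
      (fun t w => state a X0 t w - Xh t (obs W S t w)).
Proof.
move=> a_gt0 mX0 _ W_ge0 S_ge0 iidW iidS _ _ _ Xh0_ok Gamma0_gt1 tn Xh0_cvg.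
pose B := Gamma0 * fine (\int[P]_w (Dtime W S 0 w)%:E).
have ED_ge0 : (0 <= \int[P]_w (Dtime W S 0 w)%:E)%E.
  by apply: integral_ge0 => w _; rewrite lee_fin Dtime_ge0.
have B_ge0 : 0 <= B.
  by rewrite mulr_ge0 ?fine_ge0 // ltW // (lt_trans ltr01).
have tnE n : tn n = n%:R * B.
  by rewrite /tn expectation_calT // fine_EFinM_ge0 // mulrCA.
pose sigma t := tn (Num.truncn (t / B)).
have error_eq t w : 0 <= t -> est_error a X0 W S (extrapolate a sigma Xh0) t w =
    expR (a * (t - sigma t)) * est_error a X0 W S Xh0 (sigma t) w.
  by move=> t_ge0; rewrite est_error_extrapolate // /sigma tnE truncn_div_le.
have mErr Xh : estimator_ok W S Xh -> forall t, measurable_fun setT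
    (est_error a X0 W S Xh t) by move=> Xh_ok t; exact: measurable_est_error.
have Xh_ok := estimator_ok_extrapolate a sigma W_ge0 S_ge0 Xh0_ok.
exists (extrapolate a sigma Xh0); split => //.
change (cvg_prob0 P +oo (est_error a X0 W S (extrapolate a sigma Xh0))).
have [B_gt0|B_le0] := ltP 0 B.
  apply: (cvg_prob0_le_scale P (mErr _ Xh_ok) (fun t => mErr _ Xh0_ok (sigma t))
    (expR_gt0 (a * B))); last first.
    move=> eps eps_gt0.
    exact: cvg_comp _ _ (truncn_div_cvg B_gt0) (Xh0_cvg eps eps_gt0).
  near=> t => w; rewrite error_eq // normrM ger0_norm ?expR_ge0 // ler_wpM2r //.
  by rewrite ler_expR ler_pM2l // /sigma tnE truncn_div_gap.
have B0 : B = 0 by apply/le_anti; rewrite B_le0 B_ge0.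
have tn0 : tn = fun=> 0 by apply: funext => n; rewrite tnE B0 mulr0.
have sigma0 t : sigma t = 0 by rewrite /sigma tn0.
rewrite tn0 in Xh0_cvg.
apply: (cvg_prob0_null_scale P (mErr _ Xh_ok) (mErr _ Xh0_ok 0) _
  (fun t => expR_gt0 (a * t))).
  exact: (cvg_prob0_cst_null (F := \oo) P Xh0_cvg).
near=> t => w; rewrite error_eq // sigma0 subr0 normrM ger0_norm ?expR_ge0 //.
Unshelve. all: end_near.
Qed.
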